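(* Let $n\ge 2$ and let $\beta\in B_n$ be a braid whose closure is a knot. Write the unreduced Burau matrix in block form $$\psi_n(\beta)=\begin{pmatrix}\hat\beta_n&b_\beta\\ c_\beta&d_\beta\end{pmatrix}$$ with $\hat\beta_n$ of size $(n-1)\times(n-1)$, $b_\beta$ a column, $c_\beta$ a row and $d_\beta\in\mathbb{Z}[t^{\pm1}]$. Then $\det(I_{n-1}-\hat\beta_n)\neq0$ and, in $\mathbb{Q}(t)$, $$d_\beta+c_\beta(I_{n-1}-\hat\beta_n)^{-1}b_\beta=1.$$
   Context: $\psi_n\colon B_n\to\mathrm{GL}_n(\mathbb{Z}[t^{\pm1}])$ is the unreduced Burau representation sending the Artin generator $\sigma_i$ to $I_{i-1}\oplus\left(\begin{smallmatrix}1-t&t\\1&0\end{smallmatrix}\right)\oplus I_{n-i-1}$; $I_k$ is the $k\times k$ identity matrix. *)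

From HB Require Import structures.
From mathcomp Require Import all_boot all_order all_algebra.
Set Implicit Arguments. Unset Strict Implicit. Unset Printing Implicit Defensive.
Import Order.TTheory GRing.Theory Num.Theory.
Local Open Scope ring_scope.

(* The field Q(t), containing Z[t^{+-1}]. *)
Definition QT : fieldType := {fraction {poly rat}}.
Definition tvar : QT := FracField.tofrac 'X.

(* A braid word in B_n: a list of letters (i, true) = sigma_i, (i, false) = sigma_i^{-1},
   with i : 'I_(n-1) meaning the generator sigma_{i+1} (0-based index). *)
Definition braid_word (n : nat) := seq ('I_n.-1 * bool).

(* Unreduced Burau image of sigma_{i+1}: block [[1-t, t],[1, 0]] at rows/cols i, i+1. *)
Definition burau_gen (n : nat) (i : nat) : 'M[QT]_n :=
  \matrix_(j < n, k < n)
    if (j : nat) == i then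
      (if (k : nat) == i then 1 - tvar else if (k : nat) == i.+1 then tvar else 0)
    else if (j : nat) == i.+1 then ((k : nat) == i)%:R
    else ((j : nat) == k)%:R.

(* Its inverse: block [[0, 1],[t^{-1}, 1 - t^{-1}]]. *)
Definition burau_gen_inv (n : nat) (i : nat) : 'M[QT]_n :=
  \matrix_(j < n, k < n)
    if (j : nat) == i then ((k : nat) == i.+1)%:R
    else if (j : nat) == i.+1 then
      (if (k : nat) == i then tvar^-1 else if (k : nat) == i.+1 then 1 - tvar^-1 else 0)
    else ((j : nat) == k)%:R.

Definition burau_letter (n : nat) (g : 'I_n.-1 * bool) : 'M[QT]_n :=
  if g.2 then burau_gen n g.1 else burau_gen_inv n g.1.

Definition burau (n : nat) (w : braid_word n) : 'M[QT]_n :=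
  foldr (fun g M => burau_letter g *m M) 1%:M w.

(* Underlying permutation of {0,...,n-1}: sigma_{i+1}^{+-1} acts as transposition (i i+1). *)
Definition swapn (i j : nat) : nat :=
  if j == i then i.+1 else if j == i.+1 then i else j.

Definition braid_perm (n : nat) (w : braid_word n) : nat -> nat :=
  foldr (fun (g : 'I_n.-1 * bool) f => swapn g.1 \o f) id w.

(* The closure of w is a knot (one component) iff its permutation is a single
   n-cycle, i.e. the orbit of strand 0 contains every strand. *)
Definition closure_is_knot (n : nat) (w : braid_word n) : Prop :=
  forall j, (j < n)%N -> exists k, iter k (braid_perm w) 0%N = j.

Definition split_eq (n : nat) (hn : (0 < n)%N) : n = (n.-1 + 1)%N :=
  etrans (esym (prednK hn)) (esym (addn1 n.-1)).

Definition blockify (n : nat) (hn : (0 < n)%N) (A : 'M[QT]_n)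
  : 'M[QT]_(n.-1 + 1) := castmx (split_eq hn, split_eq hn) A.

From HB Require Import structures.
From mathcomp Require Import all_boot all_order all_algebra.
From mathcomp Require Import zify.
Set Implicit Arguments. Unset Strict Implicit. Unset Printing Implicit Defensive.
Import GRing.Theory.
Local Open Scope ring_scope.

(* At t = 1 the Burau matrix of a braid becomes the permutation matrix of its
   underlying permutation. For a knot this permutation is an n-cycle, and then
   the top-left (n-1)-minor of 1 - (permutation matrix) is invertible: a left
   kernel vector is invariant along the cycle and vanishes at the removed strand.
   Since the determinant commutes with evaluation at t = 1, det (1 - bhat) is
   nonzero. Row sums of Burau matrices are 1, so b = (1 - bhat) 1 and d = 1 - c 1,
   which gives d + c (1 - bhat)^-1 b = d + c 1 = 1. *)

Local Notation tofrac := (@FracField.tofrac _).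

(* [f] is defined at t = 1 with value [r]; evaluation at 1 is only a partial map
   on Q(t), hence a relation. *)
Definition eval_at1 (f : QT) (r : rat) := exists p q : {poly rat},
  [/\ q.[1] != 0, f = tofrac p / tofrac q & r = p.[1] / q.[1]].

Lemma tofrac_neq0_at1 (q : {poly rat}) : q.[1] != 0 -> tofrac q != 0 :> QT.
Proof. by move=> q1; rewrite tofrac_eq0; apply: contra q1 => /eqP ->; rewrite horner0. Qed.

Lemma eval_at1_uniq f r s : eval_at1 f r -> eval_at1 f s -> r = s.
Proof.
move=> [p [q [q1 -> ->]]] [p' [q' [q'1 E ->]]].
have q0 := tofrac_neq0_at1 q1; have q'0 := tofrac_neq0_at1 q'1.
move/eqP: E; rewrite eqr_div // -!tofracM tofrac_eq => /eqP/(congr1 (horner^~ 1)).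
by rewrite !hornerM => E; apply/eqP; rewrite eqr_div // E.
Qed.

Lemma eval_at1D f g r s : eval_at1 f r -> eval_at1 g s -> eval_at1 (f + g) (r + s).
Proof.
move=> [p [q [q1 -> ->]]] [p' [q' [q'1 -> ->]]].
exists (p * q' + p' * q), (q * q'); split; first by rewrite hornerM mulf_neq0.
  by rewrite tofracD !tofracM addf_div ?tofrac_neq0_at1.
by rewrite hornerD !hornerM addf_div.
Qed.

Lemma eval_at1M f g r s : eval_at1 f r -> eval_at1 g s -> eval_at1 (f * g) (r * s).
Proof.
move=> [p [q [q1 -> ->]]] [p' [q' [q'1 -> ->]]].
exists (p * p'), (q * q'); split; first by rewrite hornerM mulf_neq0.
  by rewrite !tofracM mulf_div.
by rewrite !hornerM mulf_div.
Qed.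

Lemma eval_at1N f r : eval_at1 f r -> eval_at1 (- f) (- r).
Proof.
move=> [p [q [q1 -> ->]]]; exists (- p), q.
by split; rewrite ?tofracN ?hornerN ?mulNr.
Qed.

Lemma eval_at1_tofrac (p : {poly rat}) : eval_at1 (tofrac p) p.[1].
Proof. by exists p, 1; rewrite tofrac1 hornerC !divr1 oner_neq0. Qed.

Lemma eval_at1_nat (b : bool) : eval_at1 b%:R b%:R.
Proof.
by case: b; [have := eval_at1_tofrac 1; rewrite tofrac1 | have := eval_at1_tofrac 0;
  rewrite tofrac0]; rewrite hornerC.
Qed.

Lemma eval_at1_t : eval_at1 tvar 1.
Proof. by have := eval_at1_tofrac 'X; rewrite hornerX. Qed.

Lemma eval_at1_tV : eval_at1 tvar^-1 1.
Proof. by exists 1, 'X; rewrite tofrac1 div1r hornerX hornerC divr1 oner_neq0. Qed.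

Lemma eval_at1_if (b : bool) f g r s : eval_at1 f r -> eval_at1 g s ->
  eval_at1 (if b then f else g) (if b then r else s).
Proof. by case: b. Qed.

Lemma eval_at1_sum (I : finType) (F : I -> QT) (G : I -> rat) :
  (forall i, eval_at1 (F i) (G i)) -> eval_at1 (\sum_i F i) (\sum_i G i).
Proof.
move=> FG; apply: (big_ind2 eval_at1 (eval_at1_nat false)) => [????|i _].
  exact: eval_at1D.
exact: FG.
Qed.

Lemma eval_at1_prod (I : finType) (F : I -> QT) (G : I -> rat) :
  (forall i, eval_at1 (F i) (G i)) -> eval_at1 (\prod_i F i) (\prod_i G i).
Proof.
move=> FG; apply: (big_ind2 eval_at1 (eval_at1_nat true)) => [????|i _].
  exact: eval_at1M.
exact: FG.
Qed.

Definition mx_eval_at1 m n (A : 'M[QT]_(m, n)) (B : 'M[rat]_(m, n)) :=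
  forall i j, eval_at1 (A i j) (B i j).

Lemma mx_eval_at1M m n p (A : 'M_(m, n)) (B : 'M_(n, p)) A' B' :
  mx_eval_at1 A A' -> mx_eval_at1 B B' -> mx_eval_at1 (A *m B) (A' *m B').
Proof. by move=> AA BB i j; rewrite !mxE; apply: eval_at1_sum => k; apply: eval_at1M. Qed.

Lemma mx_eval_at1B m n (A B : 'M_(m, n)) A' B' :
  mx_eval_at1 A A' -> mx_eval_at1 B B' -> mx_eval_at1 (A - B) (A' - B').
Proof. by move=> AA BB i j; rewrite !mxE; apply/eval_at1D/eval_at1N. Qed.

Lemma mx_eval_at1_1 n : mx_eval_at1 (1%:M : 'M_n) 1%:M.
Proof. by move=> i j; rewrite !mxE; apply: eval_at1_nat. Qed.

Lemma mx_eval_at1_cast m n m' n' (e : (m = m') * (n = n')) A A' :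
  mx_eval_at1 A A' -> mx_eval_at1 (castmx e A) (castmx e A').
Proof. by move=> AA i j; rewrite !castmxE. Qed.

Lemma mx_eval_at1_ul m n (A : 'M_(m + 1, n + 1)) A' :
  mx_eval_at1 A A' -> mx_eval_at1 (ulsubmx A) (ulsubmx A').
Proof. by move=> AA i j; rewrite !mxE. Qed.

Lemma eval_at1_det n (A : 'M_n) A' : mx_eval_at1 A A' -> eval_at1 (\det A) (\det A').
Proof.
move=> AA; apply: eval_at1_sum => s; apply: eval_at1M.
  by case: (perm.odd_perm s); [exact: eval_at1N (eval_at1_nat true) | exact: eval_at1_nat true].
exact: eval_at1_prod.
Qed.

Lemma det_neq0_at1 n (A : 'M_n) A' : mx_eval_at1 A A' -> \det A' != 0 -> \det A != 0.
Proof.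
move=> /eval_at1_det AA; apply: contraNneq => A0.
have A00 : eval_at1 (\det A) 0 by rewrite A0; apply: eval_at1_nat false.
by rewrite (eval_at1_uniq AA A00).
Qed.

Lemma sum_ord_if_eq (R : nmodType) (u : nat -> R) N c :
  \sum_(k < N) (if (k : nat) == c then u k else 0) = if (c < N)%N then u c else 0.
Proof. by rewrite -big_mkcond big_ord1_eq. Qed.

Lemma sum_ord_nat_eq (R : pzSemiRingType) N c : (c < N)%N ->
  \sum_(k < N) (((k : nat) == c)%:R : R) = 1.
Proof.
move=> cN; rewrite (eq_bigr (fun k : 'I_N => if (k : nat) == c then 1 else 0)).
  by rewrite (sum_ord_if_eq (fun=> 1)) cN.
by move=> k _; case: eqP.
Qed.

Definition nat_perm_mx (R : nzRingType) n (f : nat -> nat) : 'M[R]_n :=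
  \matrix_(j < n, k < n) (f k == j)%:R.

Lemma nat_perm_mxM (R : nzRingType) n (f g : nat -> nat) :
  (forall k, (k < n)%N -> (g k < n)%N) ->
  nat_perm_mx R n (f \o g) = nat_perm_mx R n f *m nat_perm_mx R n g.
Proof.
move=> gn; apply/matrixP => j k; rewrite !mxE.
under eq_bigr => l _ do rewrite !mxE mulr_natr mulrb eq_sym.
by rewrite (sum_ord_if_eq (fun l => (f l == j)%:R)) gn.
Qed.

Lemma ulsubmx_nat_perm_mx (R : nzRingType) n (hn : (0 < n)%N) f :
  ulsubmx (castmx (split_eq hn, split_eq hn) (nat_perm_mx R n f)) = nat_perm_mx R n.-1 f.
Proof. by apply/matrixP => j k; rewrite !mxE castmxE !mxE. Qed.

Lemma swapnK i : involutive (swapn i).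
Proof. by move=> j; rewrite /swapn; do ![case: eqP => //=]; lia. Qed.

Lemma swapn_lt n (i : 'I_n.-1) j : (j < n)%N -> (swapn i j < n)%N.
Proof. by have := ltn_ord i; rewrite /swapn; do ![case: eqP => //]; lia. Qed.

Lemma braid_perm_lt n (w : braid_word n) j : (j < n)%N -> (braid_perm w j < n)%N.
Proof. by elim: w => [|g w IH] //= jn; apply/swapn_lt/IH. Qed.

Lemma braid_perm_surj n (w : braid_word n) j :
  (j < n)%N -> exists2 k, (k < n)%N & braid_perm w k = j.
Proof.
elim: w j => [|g w IH] j jn /=; first by exists j.
have [k kn wk] := IH _ (swapn_lt g.1 jn).
by exists k => //=; rewrite wk swapnK.
Qed.

Lemma burau_letter_at1 n (g : 'I_n.-1 * bool) :
  mx_eval_at1 (burau_letter g) (nat_perm_mx rat n (swapn g.1)).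
Proof.
case: g => i [] j k; rewrite /burau_letter !mxE /swapn /=.
  have -> : (((if (k : nat) == i then i.+1 else if (k : nat) == i.+1 then (i : nat) else k)
                == j)%:R : rat)
      = if (j : nat) == i then (if (k : nat) == i then 1 - 1 else if (k : nat) == i.+1 then 1 else 0)
        else if (j : nat) == i.+1 then ((k : nat) == i)%:R else (j == k :> nat)%:R.
    by do ![case: eqP => /=]; rewrite ?subrr //; lia.
  do ![apply: eval_at1_if]; try exact: eval_at1_nat; try exact: eval_at1_nat false; try exact: eval_at1_t.
  exact: eval_at1D (eval_at1_nat true) (eval_at1N eval_at1_t).
have -> : (((if (k : nat) == i then i.+1 else if (k : nat) == i.+1 then (i : nat) else k)
              == j)%:R : rat)
    = if (j : nat) == i then ((k : nat) == i.+1)%:R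
      else if (j : nat) == i.+1 then (if (k : nat) == i then 1 else if (k : nat) == i.+1 then 1 - 1 else 0)
      else (j == k :> nat)%:R.
  by do ![case: eqP => /=]; rewrite ?subrr //; lia.
do ![apply: eval_at1_if]; try exact: eval_at1_nat; try exact: eval_at1_nat true;
  try exact: eval_at1_nat false; try exact: eval_at1_tV.
exact: eval_at1D (eval_at1_nat true) (eval_at1N eval_at1_tV).
Qed.

Lemma burau_at1 n (w : braid_word n) :
  mx_eval_at1 (burau w) (nat_perm_mx rat n (braid_perm w)).
Proof.
elim: w => [|g w IH] /=.
  by move=> j k; rewrite !mxE eq_sym; apply: eval_at1_nat.
rewrite nat_perm_mxM; last exact: braid_perm_lt.
exact: mx_eval_at1M (burau_letter_at1 g) IH.
Qed.

Lemma iter_orbit_reach (f : nat -> nat) n :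
  (forall j, (j < n)%N -> exists k, iter k f 0%N = j) ->
  (exists2 p, (0 < p)%N & iter p f 0%N = 0%N) ->
  forall x y, (x < n)%N -> (y < n)%N -> exists k, iter k f x = y.
Proof.
move=> orbit [p p_gt0 fp0] x y xn yn.
have [b <-] := orbit x xn; have [a <-] := orbit y yn.
have fp0M m : iter (m * p) f 0%N = 0%N by elim: m => //= m IH; rewrite mulSn iterD IH fp0.
by exists (a + (b * p - b))%N; rewrite iterD -(iterD (b * p - b) b) subnK ?leq_pmulr ?fp0M.
Qed.

Lemma iter_invariant_reach (T : Type) (f : nat -> nat) (y : nat -> T) n t :
  (forall x, (x < n)%N -> (f x < n)%N) ->
  (forall x, (x < n)%N -> x != t -> y (f x) = y x) ->
  forall x, (x < n)%N -> (exists k, iter k f x = t) -> y x = y t.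
Proof.
move=> fn fy x xn [k]; elim: k x xn => [|k IH] x xn; first by move=> /= ->.
rewrite iterSr => /IH -/(_ (fn _ xn)) yfx.
by case: (eqVneq x t) => [-> | xt]; rewrite // -fy.
Qed.

Lemma det_one_sub_nat_perm_mx_neq0 (F : fieldType) N (f : nat -> nat) :
  (forall x, (x <= N)%N -> (f x <= N)%N) ->
  (forall x, (x <= N)%N -> exists k, iter k f x = N) ->
  \det (1%:M - nat_perm_mx F N f) != 0.
Proof.
move=> fN reach; apply/negP => /det0P[v v_neq0 vker].
have vP : v = v *m nat_perm_mx F N f.
  by apply/eqP; rewrite -subr_eq0 -{1}(mulmx1 v) -mulmxBr vker.
pose y m : F := if insub m is Some l then v 0 l else 0.
have yv (l : 'I_N) : y l = v 0 l by rewrite /y valK.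
have yN : y N = 0 by rewrite /y insubN ?ltnn.
have yf (l : 'I_N) : y (f l) = y l.
  rewrite yv [in RHS]vP mxE; under eq_bigr => m _ do rewrite mxE mulr_natr mulrb eq_sym -yv.
  rewrite (sum_ord_if_eq y); case: ltnP => // fl.
  by have -> : f l = N by apply/eqP; rewrite eqn_leq fl fN // ltnW.
apply/(negP v_neq0)/eqP/matrixP => i l; rewrite ord1 mxE -yv -yN.
have lN : (l <= N)%N by apply: ltnW.
apply: (iter_invariant_reach (f := f) (y := y) (n := N.+1)) lN (reach l lN).
- by move=> x; rewrite !ltnS; apply: fN.
- move=> x; rewrite ltnS => xN xneq; have xN' : (x < N)%N by rewrite ltn_neqAle xneq.
  by rewrite -[x]/(val (Ordinal xN')) yf.
Qed.

Lemma braid_perm_reach n (w : braid_word n) : closure_is_knot w ->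
  forall x y, (x < n)%N -> (y < n)%N -> exists k, iter k (braid_perm w) x = y.
Proof.
move=> knot x y xn; have n_gt0 := leq_ltn_trans (leq0n x) xn.
have [j jn wj] := braid_perm_surj w n_gt0; have [k kj] := knot j jn.
by apply: iter_orbit_reach knot _ x y xn; exists k.+1; rewrite // iterS kj wj.
Qed.

Lemma sum_ord_if2 (R : nmodType) N c (x y : R) : (c.+1 < N)%N ->
  \sum_(k < N) (if (k : nat) == c then x else if (k : nat) == c.+1 then y else 0) = x + y.
Proof.
move=> cN; rewrite (eq_bigr (fun k : 'I_N =>
  (if (k : nat) == c then x else 0) + (if (k : nat) == c.+1 then y else 0))).
  by rewrite big_split /= (sum_ord_if_eq (fun=> x)) (sum_ord_if_eq (fun=> y)) cN (ltnW cN).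
by move=> k _; case: eqP => [->|]; rewrite ?(ltn_eqF (ltnSn c)) ?addr0 ?add0r.
Qed.

Lemma burau_letter_rowsum n (g : 'I_n.-1 * bool) :
  burau_letter g *m const_mx 1 = const_mx 1 :> 'cV[QT]_n.
Proof.
apply/matrixP => j z; rewrite !mxE.
have iN : ((g.1 : nat).+1 < n)%N by have := ltn_ord g.1; lia.
case: g iN => i [] /= iN; rewrite /burau_letter /=;
  under eq_bigr => k _ do rewrite !mxE mulr1.
- case: eqP => _; first by rewrite sum_ord_if2 // subrK.
  case: eqP => _; first exact: sum_ord_nat_eq (ltnW iN).
  by under eq_bigr do rewrite eq_sym; rewrite sum_ord_nat_eq.
- case: eqP => _; first exact: sum_ord_nat_eq.
  case: eqP => _; first by rewrite sum_ord_if2 // addrC subrK.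
  by under eq_bigr do rewrite eq_sym; rewrite sum_ord_nat_eq.
Qed.

Lemma burau_rowsum n (w : braid_word n) : burau w *m const_mx 1 = const_mx 1 :> 'cV[QT]_n.
Proof.
elim: w => [|g w IH] /=; first by rewrite mul1mx.
by rewrite -mulmxA IH burau_letter_rowsum.
Qed.

Lemma castmx_rowsum (R : nzRingType) n m (e : n = m) (A : 'M[R]_n) :
  A *m const_mx 1 = const_mx 1 :> 'cV_n ->
  castmx (e, e) A *m const_mx 1 = const_mx 1 :> 'cV_m.
Proof. by case: m / e; rewrite castmx_id. Qed.

Lemma rowsum_block_schur (R : comUnitRingType) m (P : 'M[R]_(m + 1)) :
  P *m const_mx 1 = const_mx 1 :> 'cV_(m + 1) -> (1%:M - ulsubmx P) \in unitmx ->
  drsubmx P + dlsubmx P *m invmx (1%:M - ulsubmx P) *m ursubmx P = 1%:M.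
Proof.
rewrite -[P in P *m _]submxK -!col_mx_const mul_block_col => /eq_col_mx[top bot] unitA.
have one11 : const_mx 1 = 1%:M :> 'M[R]_1 by apply/matrixP => i j; rewrite !ord1 !mxE.
rewrite one11 !mulmx1 in top bot.
have -> : ursubmx P = (1%:M - ulsubmx P) *m const_mx 1.
  by rewrite mulmxBl mul1mx -{1}top addrC addKr.
by rewrite -mulmxA mulKmx // addrC.
Qed.

Theorem mainTheorem7 (n : nat) (hn : (2 <= n)%N) (w : braid_word n) :
  closure_is_knot w ->
  let P := blockify (ltnW hn) (burau w) in
  let bhat := ulsubmx P in
  let b := ursubmx P in
  let c := dlsubmx P in
  let d := drsubmx P in
  \det (1%:M - bhat) != 0 /\
  d + c *m invmx (1%:M - bhat) *m b = 1%:M.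
Proof.
move=> knot P bhat b c d.
have det_neq0 : \det (1%:M - bhat) != 0.
  apply: (det_neq0_at1 (A' := 1%:M - nat_perm_mx rat n.-1 (braid_perm w))).
    apply: mx_eval_at1B; first exact: mx_eval_at1_1.
    rewrite /bhat /P /blockify -(ulsubmx_nat_perm_mx _ (ltnW hn)).
    exact/mx_eval_at1_ul/mx_eval_at1_cast/burau_at1.
  apply: det_one_sub_nat_perm_mx_neq0 => x xn; have xn' : (x < n)%N by lia.
    by have := braid_perm_lt w xn'; lia.
  by apply: braid_perm_reach knot _ _ xn' _; lia.
split=> //; apply: rowsum_block_schur; last by rewrite unitmxE unitfE.
exact/castmx_rowsum/burau_rowsum.
Qed.
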